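(* Every $2\times2$ minor of $X$ lies in the ideal $\mathcal{I}'+\big(\wedge^2(B_1|B_2),\ \mathrm{Tr}(A)+2\pi,\ \text{entries of } B_2J_{n-r}B_1^{t}-AJ_{l}\big)$ of $S$.
   Context: Let $p$ be an odd prime, $F/\mathbb{Q}_p$ a finite extension with uniformizer $\pi$, $\mathcal{O}$ the ring of integers of the completion $\breve F$ of the maximal unramified extension of $F$ ($\pi$ is a uniformizer of $\mathcal{O}$, $2\in\mathcal{O}^\times$). Let $n\ge3$ and $1\le r\le n-1$ be integers, $d=2n$, $l=2r$. Let $X=(x_{i,j})_{1\le i,j\le d}$ be a matrix of indeterminates and $S=\mathcal{O}[(x_{i,j})]$. Write $X$ in block form $X=\begin{pmatrix}E_1&O_1&E_2\\ B_1&A&B_2\\ E_3&O_2&E_4\end{pmatrix}$ with $E_c$ of size $(n-r)\times(n-r)$, $O_1,O_2$ of size $(n-r)\times l$, $B_1,B_2$ of size $l\times(n-r)$, $A$ of size $l\times l$. Let $Z=\{n-r+1,\dots,n+r\}$ and $Z^c=\{1,\dots,d\}\setminus Z$. Let $J_m$ be the $m\times m$ antidiagonal matrix with $1$'s on the antidiagonal. Let $\wedge^2(B_1|B_2)$ denote the set of elements $x_{i,j}x_{t,s}-x_{i,s}x_{t,j}$ with $i,t\in Z$, $j,s\in Z^c$. Let $\mathcal{I}'\subset S$ be the ideal generated by the entries of the six matrices $E_1+\tfrac12J_{n-r}B_2^tJ_lB_1$, $E_2+\tfrac12J_{n-r}B_2^tJ_lB_2$, $E_3+\tfrac12J_{n-r}B_1^tJ_lB_1$,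 $E_4+\tfrac12J_{n-r}B_1^tJ_lB_2$, $O_1+\tfrac12J_{n-r}B_2^tJ_lA$, $O_2+\tfrac12J_{n-r}B_1^tJ_lA$. *)

From HB Require Import structures.
From mathcomp Require Import all_boot all_algebra.
From mathcomp Require Export mpoly.
Set Implicit Arguments. Unset Strict Implicit. Unset Printing Implicit Defensive.
Import GRing.Theory.
Local Open Scope ring_scope.

Definition in_ideal (T : comRingType) (P : T -> Prop) (f : T) : Prop :=
  exists s : seq (T * T),
    (forall q, q \in s -> P q.2) /\ f = \sum_(q <- s) q.1 * q.2.

(* The polynomial ring S = R[x_{i,j} : 0 <= i,j < d] with d*d variables;
   the indeterminate x_{i,j} (0-based indices) is 'X_(i*d+j). *)
Definition polyS (R : comUnitRingType) (d : nat) := {mpoly R[d * d]}.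

Definition xv (R : comUnitRingType) (d : nat) (i j : nat) : polyS R d :=
  match @insub _ (fun k => k < d * d)%N _ (i * d + j)%N with
  | Some k => 'X_k
  | None => 0
  end.

Definition Jmx (T : comRingType) (m : nat) : 'M[T]_m :=
  \matrix_(i < m, j < m) ((i + j)%N == m.-1)%:R.

Section Blocks.
Variables (R : comUnitRingType) (n r : nat).
(* d = 2n, m = n - r (size of E_c), l = 2r (size of A).  0-based block ranges:
   rows/cols [0,m), [m, m+l), [m+l, d). *)
Definition dd := (2 * n)%N.
Definition mm := (n - r)%N.
Definition ll := (2 * r)%N.
Local Notation S := (polyS R dd).
Local Notation x := (@xv R dd).

Definition E1 : 'M[S]_(mm, mm) := \matrix_(a, b) x a b.
Definition O1 : 'M[S]_(mm, ll) := \matrix_(a, c) x a (mm + c).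
Definition E2 : 'M[S]_(mm, mm) := \matrix_(a, b) x a (mm + ll + b).
Definition B1 : 'M[S]_(ll, mm) := \matrix_(c, b) x (mm + c) b.
Definition Amx : 'M[S]_(ll, ll) := \matrix_(c, e) x (mm + c) (mm + e).
Definition B2 : 'M[S]_(ll, mm) := \matrix_(c, b) x (mm + c) (mm + ll + b).
Definition E3 : 'M[S]_(mm, mm) := \matrix_(a, b) x (mm + ll + a) b.
Definition O2 : 'M[S]_(mm, ll) := \matrix_(a, c) x (mm + ll + a) (mm + c).
Definition E4 : 'M[S]_(mm, mm) := \matrix_(a, b) x (mm + ll + a) (mm + ll + b).

Definition half : S := (2%:R : R)^-1 %:MP.
Local Notation J := (@Jmx S).

Definition G1 := E1 + half *: (J mm *m B2^T *m J ll *m B1).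
Definition G2 := E2 + half *: (J mm *m B2^T *m J ll *m B2).
Definition G3 := E3 + half *: (J mm *m B1^T *m J ll *m B1).
Definition G4 := E4 + half *: (J mm *m B1^T *m J ll *m B2).
Definition G5 := O1 + half *: (J mm *m B2^T *m J ll *m Amx).
Definition G6 := O2 + half *: (J mm *m B1^T *m J ll *m Amx).

Definition gen_I' (f : S) : Prop :=
  (exists a b, f = G1 a b) \/ (exists a b, f = G2 a b) \/
  (exists a b, f = G3 a b) \/ (exists a b, f = G4 a b) \/
  (exists a c, f = G5 a c) \/ (exists a c, f = G6 a c).

(* Z = {m, ..., m+l-1} (0-based version of {n-r+1, ..., n+r}). *)
Definition inZ (i : nat) : bool := (mm <= i < mm + ll)%N.
Definition inZc (j : nat) : bool := (j < dd)%N && ~~ inZ j.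

Definition gen_big (pi : R) (f : S) : Prop :=
  gen_I' f \/
  (exists i t j s, [/\ inZ i, inZ t, inZc j & inZc s] /\
      f = x i j * x t s - x i s * x t j) \/
  f = \tr Amx + 2%:R * pi%:MP \/
  (exists c e, f = (B2 *m J mm *m B1^T - Amx *m J ll) c e).
End Blocks.

From Pilot Require Import Defs.
From mathcomp Require Import all_boot all_algebra.
From mathcomp Require Import mpoly.
From mathcomp Require Import ring zify.
Import GRing.Theory.
Local Open Scope ring_scope.

(* The proof is a two-step row/column reduction.
   1. Rows.  The generators of I' say that, modulo I, each row of X outside
      the middle block Z is a linear combination of the middle rows (with
      coefficients from J B2^t J or J B1^t J); middle rows are trivially so.
   2. Columns.  Modulo I, each entry of a middle row lying in a middle column
      (i.e. an entry of A) is a combination of entries of the same row in the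
      outer columns Z^c, because A = A J J = (B2 J B1^t) J modulo I.
   Since a 2x2 minor is bilinear in its two rows and in its two columns, it is
   therefore congruent modulo I to a combination of minors with rows in Z and
   columns in Z^c, which are generators of I.  Neither the value 1/2 of the
   scalar in I' nor the generator Tr(A) + 2 pi is needed. *)

Section IdealMembership.
Variables (T : comNzRingType) (P : T -> Prop).
Local Notation I := (in_ideal P).

Lemma ideal0 : I 0.
Proof. by exists [::]; split => //; rewrite big_nil. Qed.

Lemma ideal_gen g : P g -> I g.
Proof.
move=> Pg; exists [:: (1, g)]; split; first by move=> q; rewrite inE => /eqP ->.
by rewrite big_seq1 mul1r.
Qed.

Lemma idealD f g : I f -> I g -> I (f + g).
Proof.
move=> [s [Ps ->]] [s' [Ps' ->]]; exists (s ++ s'); split; last by rewrite big_cat.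
by move=> q; rewrite mem_cat => /orP [/Ps|/Ps'].
Qed.

Lemma idealMl a f : I f -> I (a * f).
Proof.
move=> [s [Ps ->]]; exists [seq (a * q.1, q.2) | q <- s]; split.
  by move=> q /mapP [q' /Ps Pq' ->].
by rewrite big_map mulr_sumr; apply: eq_bigr => q _; rewrite mulrA.
Qed.

Lemma idealN f : I f -> I (- f).
Proof. by rewrite -mulN1r; apply: idealMl. Qed.

Lemma ideal_sum (K : finType) (F : K -> T) : (forall k, I (F k)) -> I (\sum_k F k).
Proof. by move=> IF; apply: (big_ind I); [exact: ideal0 | exact: idealD |]. Qed.

Definition equiv_mod f g := I (f - g).

Lemma equiv_mod_refl f : equiv_mod f f.
Proof. by rewrite /equiv_mod subrr; apply: ideal0. Qed.

Lemma equiv_modM f f' g g' :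
  equiv_mod f f' -> equiv_mod g g' -> equiv_mod (f * g) (f' * g').
Proof.
rewrite /equiv_mod => Hf Hg.
have -> : f * g - f' * g' = g * (f - f') + f' * (g - g') by ring.
by apply: idealD; apply: idealMl.
Qed.

Lemma equiv_modB f f' g g' :
  equiv_mod f f' -> equiv_mod g g' -> equiv_mod (f - g) (f' - g').
Proof.
rewrite /equiv_mod => Hf Hg.
have -> : f - g - (f' - g') = (f - f') + - (g - g') by ring.
by apply: idealD => //; apply: idealN.
Qed.

Lemma equiv_mod_ideal f g : equiv_mod f g -> I g -> I f.
Proof.
rewrite /equiv_mod => Hfg Ig; have -> : f = (f - g) + g by ring.
exact: idealD.
Qed.
End IdealMembership.
Arguments equiv_mod {T} P f g.
Local Notation "f == g [mod P ]" := (equiv_mod P f g) (at level 70, g at next level).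

Definition minor (T : comNzRingType) (A B : Type) (x : A -> B -> T)
  (i t : A) (j s : B) : T := x i j * x t s - x i s * x t j.
Arguments minor {T A B}.

Lemma minor_transpose (T : comNzRingType) (A B : Type) (x : A -> B -> T) i t j s :
  minor (fun b a => x a b) j s i t = minor x i t j s.
Proof. by rewrite /minor; ring. Qed.

Lemma minor_sum_rows (T : comNzRingType) (K : finType) (a b u v : K -> T) :
  (\sum_k a k * u k) * (\sum_k b k * v k) - (\sum_k a k * v k) * (\sum_k b k * u k)
  = \sum_k \sum_k' a k * b k' * (u k * v k' - v k * u k').
Proof.
rewrite !big_distrlr /= -sumrB; apply: eq_bigr => k _; rewrite -sumrB.
by apply: eq_bigr => k' _; ring.
Qed.

Section MinorReduction.
Variables (T : comNzRingType) (P : T -> Prop) (A B : Type) (x : A -> B -> T).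
Local Notation I := (in_ideal P).

Lemma minor_rows_comb (K : finType) (f : K -> A) (ci ct : K -> T) i t j s :
  (forall b, b = j \/ b = s -> x i b == \sum_k ci k * x (f k) b [mod P]) ->
  (forall b, b = j \/ b = s -> x t b == \sum_k ct k * x (f k) b [mod P]) ->
  (forall k k', I (minor x (f k) (f k') j s)) ->
  I (minor x i t j s).
Proof.
move=> Hi Ht Hf; apply: equiv_mod_ideal.
  by apply: equiv_modB; apply: equiv_modM; [apply: Hi|apply: Ht|apply: Hi|apply: Ht];
    tauto.
rewrite minor_sum_rows; apply: ideal_sum => k; apply: ideal_sum => k'.
by apply: idealMl; move: (Hf k k'); rewrite /minor [x (f k) s * _]mulrC.
Qed.
End MinorReduction.
Arguments minor_rows_comb {T} P {A B} x {K} f ci ct {i t j s}.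

Lemma minor_cols_comb (T : comNzRingType) (P : T -> Prop) (A B : Type)
    (x : A -> B -> T) (K : finType) (g : K -> B) (wj ws : K -> T) i t j s :
  (forall a, a = i \/ a = t -> x a j == \sum_k wj k * x a (g k) [mod P]) ->
  (forall a, a = i \/ a = t -> x a s == \sum_k ws k * x a (g k) [mod P]) ->
  (forall k k', in_ideal P (minor x i t (g k) (g k'))) ->
  in_ideal P (minor x i t j s).
Proof.
move=> Hj Hs Hg; rewrite -minor_transpose.
apply: (minor_rows_comb P (fun b a => x a b) g wj ws) => //.
by move=> k k'; rewrite minor_transpose.
Qed.
Arguments minor_cols_comb {T} P {A B} x {K} g wj ws {i t j s}.

Lemma sum_delta (T : comNzRingType) (K : finType) (c0 : K) (F : K -> T) :
  \sum_k (k == c0)%:R * F k = F c0.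
Proof.
rewrite (bigD1 c0) //= eqxx mul1r big1 ?addr0 // => k /negbTE ->.
by rewrite mul0r.
Qed.

Lemma Jmx_invol (T : comNzRingType) (k : nat) : Jmx T k *m Jmx T k = 1%:M.
Proof.
apply/matrixP => i j; rewrite !mxE (bigD1 (rev_ord i)) //= !mxE.
have -> : (i + rev_ord i == k.-1)%N by apply/eqP; case: i => i Hi /=; lia.
have -> : (rev_ord i + j == k.-1)%N = (i == j).
  case: i j => [i Hi] [j Hj] /=; apply/eqP/eqP => [H|[<-]]; last by lia.
  by apply: val_inj => /=; lia.
rewrite mul1r big1 ?addr0 // => e He; rewrite !mxE.
suff -> : (i + e == k.-1)%N = false by rewrite mul0r.
apply/negbTE; apply: contra He => /eqP He; apply/eqP/val_inj.
by case: i e He => [i Hi] [e He'] /=; lia.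
Qed.

Section BlockReduction.
Variables (R : comUnitRingType) (pi : R) (n r : nat).
Hypothesis r_le_n : (r <= n)%N.
Local Notation S := (polyS R (dd n)).
Local Notation x := (xv R (dd n)).
Local Notation P := (@gen_big R n r pi).
Local Notation I := (in_ideal P).
Local Notation m := (mm n r).
Local Notation l := (ll r).
Local Notation d := (dd n).
Local Notation h := (Defs.half R n).

(* Coefficients expressing the top (resp. bottom) outer rows in terms of the
   middle rows modulo I'. *)
Definition Ctop := Jmx S m *m (B2 R n r)^T *m Jmx S l.
Definition Cbot := Jmx S m *m (B1 R n r)^T *m Jmx S l.

Lemma index_blocks (j : 'I_d) : (exists b : 'I_m, (j : nat) = b) \/
  (exists c : 'I_l, (j : nat) = (m + c)%N) \/ (exists b : 'I_m, (j : nat) = (m + l + b)%N).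
Proof.
case: j => j Hj /=; case: (ltnP j m) => H1; first by left; exists (Ordinal H1).
case: (ltnP j (m + l)) => H2.
  have H : (j - m < l)%N by lia.
  by right; left; exists (Ordinal H) => /=; lia.
have H : (j - (m + l) < m)%N by move: Hj; rewrite /dd /mm /ll in H2 *; lia.
by right; right; exists (Ordinal H) => /=; lia.
Qed.

Lemma gen_entry (p q : nat) (E : 'M[S]_(p, q)) (M : 'M[S]_(p, l)) (C : 'M[S]_(l, q)) a b :
  (E + h *: (M *m C)) a b = E a b + h * \sum_k M a k * C k b.
Proof. by rewrite !mxE. Qed.

Lemma top_row_gen (a : 'I_m) (j : 'I_d) : I (x a j + h * \sum_k Ctop a k * x (m + k) j).
Proof.
apply: ideal_gen; left.
case: (index_blocks j) => [[b ->]|[[c ->]|[b ->]]].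
- left; exists a, b; rewrite gen_entry mxE.
  by congr (_ + _ * _); apply: eq_bigr => k _; rewrite [B1 _ _ _ k b]mxE.
- do 4 right; left; exists a, c; rewrite gen_entry mxE.
  by congr (_ + _ * _); apply: eq_bigr => k _; rewrite [Amx _ _ _ k c]mxE.
- right; left; exists a, b; rewrite gen_entry mxE.
  by congr (_ + _ * _); apply: eq_bigr => k _; rewrite [B2 _ _ _ k b]mxE.
Qed.

Lemma bot_row_gen (a : 'I_m) (j : 'I_d) :
  I (x (m + l + a) j + h * \sum_k Cbot a k * x (m + k) j).
Proof.
apply: ideal_gen; left.
case: (index_blocks j) => [[b ->]|[[c ->]|[b ->]]].
- do 2 right; left; exists a, b; rewrite gen_entry mxE.
  by congr (_ + _ * _); apply: eq_bigr => k _; rewrite [B1 _ _ _ k b]mxE.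
- do 5 right; exists a, c; rewrite gen_entry mxE.
  by congr (_ + _ * _); apply: eq_bigr => k _; rewrite [Amx _ _ _ k c]mxE.
- do 3 right; left; exists a, b; rewrite gen_entry mxE.
  by congr (_ + _ * _); apply: eq_bigr => k _; rewrite [B2 _ _ _ k b]mxE.
Qed.

Lemma equiv_mod_of_gen (f : S) (M y : 'I_l -> S) :
  I (f + h * \sum_k M k * y k) -> f == \sum_k - (h * M k) * y k [mod P].
Proof.
rewrite /equiv_mod.
have -> : \sum_k - (h * M k) * y k = - (h * \sum_k M k * y k).
  by rewrite mulr_sumr -sumrN; apply: eq_bigr => k _; rewrite mulNr mulrA.
by rewrite opprK.
Qed.

Lemma row_reduction (i : 'I_d) : exists c : 'I_l -> S, forall j : 'I_d,
  x i j == \sum_k c k * x (m + k) j [mod P].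
Proof.
case: (index_blocks i) => [[a ->]|[[c0 ->]|[a ->]]].
- by exists (fun k => - (h * Ctop a k)) => j; apply/equiv_mod_of_gen/top_row_gen.
- by exists (fun k => (k == c0)%:R) => j; rewrite sum_delta; apply: equiv_mod_refl.
- by exists (fun k => - (h * Cbot a k)) => j; apply/equiv_mod_of_gen/bot_row_gen.
Qed.

(* A = (B2 J B1^t) J modulo I, entrywise: A_{k,e} == sum_b x_{m+k, m+l+b} Cbot_{b,e}. *)
Lemma Amx_reduction (k e : 'I_l) :
  Amx R n r k e == \sum_(b : 'I_m) x (m + k) (m + l + b) * Cbot b e [mod P].
Proof.
set G := B2 R n r *m Jmx S m *m (B1 R n r)^T - Amx R n r *m Jmx S l.
have IG c e' : I (G c e') by apply: ideal_gen; do 3 right; exists c, e'.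
have -> : \sum_(b : 'I_m) x (m + k) (m + l + b) * Cbot b e = (B2 R n r *m Cbot) k e.
  by rewrite mxE; apply: eq_bigr => b _; rewrite [B2 _ _ _ k b]mxE.
rewrite /equiv_mod; have -> : Amx R n r k e - (B2 R n r *m Cbot) k e = - (G *m Jmx S l) k e.
  by rewrite /G mulmxBl -!mulmxA Jmx_invol mulmx1 /Cbot !mulmxA !mxE opprB.
by apply: idealN; rewrite mxE; apply: ideal_sum => e'; rewrite mulrC; apply: idealMl.
Qed.

(* The outer columns Z^c, indexed by 'I_m + 'I_m. *)
Definition outer_col (p : 'I_m + 'I_m) : nat :=
  match p with inl b => b | inr b => (m + l + b)%N end.

Lemma col_reduction (j : 'I_d) : exists w : 'I_m + 'I_m -> S, forall k : 'I_l,
  x (m + k) j == \sum_p w p * x (m + k) (outer_col p) [mod P].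
Proof.
case: (index_blocks j) => [[b ->]|[[c ->]|[b ->]]].
- exists (fun p => if p is inl b' then (b' == b)%:R else 0) => k.
  rewrite big_sumType /= sum_delta big1 ?addr0 => [|? _]; last by rewrite mul0r.
  exact: equiv_mod_refl.
- exists (fun p => if p is inr b then Cbot b c else 0) => k.
  rewrite big_sumType /= big1 ?add0r => [|? _]; last by rewrite mul0r.
  have := Amx_reduction k c; rewrite [Amx _ _ _ k c]mxE.
  by under eq_bigr do rewrite mulrC.
- exists (fun p => if p is inr b' then (b' == b)%:R else 0) => k.
  rewrite big_sumType /= big1 ?add0r => [|? _]; last by rewrite mul0r.
  rewrite sum_delta; exact: equiv_mod_refl.
Qed.

Lemma inZ_mid (k : 'I_l) : inZ n r (m + k).
Proof. by rewrite /inZ; case: k => k Hk /=; apply/andP; lia. Qed.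

Lemma outer_col_inZc p : inZc n r (outer_col p).
Proof.
rewrite /inZc /inZ; case: p => [[p Hp]|[p Hp]] /=; rewrite /dd /mm /ll in Hp *;
  apply/andP; split; try lia; apply/negP => /andP []; lia.
Qed.

Lemma mid_outer_minor (k k' : 'I_l) (p q : 'I_m + 'I_m) :
  I (minor x (m + k) (m + k') (outer_col p) (outer_col q)).
Proof.
apply: ideal_gen; right; left.
exists (m + k)%N, (m + k')%N, (outer_col p), (outer_col q).
by split; first split; rewrite ?inZ_mid ?outer_col_inZc.
Qed.

Lemma minor_in_ideal (i t j s : 'I_d) : I (minor x i t j s).
Proof.
have [c Hc] := row_reduction i; have [c' Hc'] := row_reduction t.
apply: (minor_rows_comb P x (fun k : 'I_l => (m + k)%N) c c').
- by move=> b [] ->; apply: Hc.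
- by move=> b [] ->; apply: Hc'.
have [w Hw] := col_reduction j; have [w' Hw'] := col_reduction s.
move=> k k'; apply: (minor_cols_comb P x outer_col w w').
- by move=> a [] ->; apply: Hw.
- by move=> a [] ->; apply: Hw'.
exact: mid_outer_minor.
Qed.
End BlockReduction.

Theorem lemma4p9 (R : comUnitRingType) (pi : R) (n r : nat) :
  (2%:R : R) \is a GRing.unit -> (3 <= n)%N -> (1 <= r)%N -> (r <= n - 1)%N ->
  forall i t j s : 'I_(dd n),
    in_ideal (@gen_big R n r pi)
      (xv R (dd n) i j * xv R (dd n) t s - xv R (dd n) i s * xv R (dd n) t j).
Proof.
move=> _ _ _ r_lt_n i t j s.
have r_le_n : (r <= n)%N by lia.
exact (minor_in_ideal R pi n r r_le_n i t j s).
Qed.
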